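(* Let $c_2,c_3,a_0,a_1,a_2,b_0,b_1$ be constants, $\mu(t)=t^2+c_2t+c_3$, $\phi=a_0\mu(t)^2+a_1\mu(t)+a_2$, $\psi=b_0\mu(t)+b_1$, and $\lambda_n=n(a_0(n-1)+b_0)$. Assume that for each $n\ge0$ the equation $\phi\,\mathbb{D}^2P+\psi\,\mathbb{S}\mathbb{D}P=\lambda_nP$ has a unique monic polynomial solution $P=P_n$ of degree $n$ in $\mu(t)$, and write $P_n=\vartheta_n+p_{1,n}\vartheta_{n-1}+p_{2,n}\vartheta_{n-2}+\cdots$. Then $\{P_n\}$ satisfies $P_{n+1}=(\mu(t)-\beta_n)P_n-\gamma_nP_{n-1}$ with $$\beta_n=p_{1,n}-p_{1,n+1}+f_n,\qquad \gamma_n=p_{1,n}(f_{n-1}-\beta_n)+p_{2,n}-p_{2,n+1},$$ where $$p_{1,n}=-\frac{n\big(a_0(n-1)(f_{n-2}+f_{n-1})+a_1(n-1)+b_0(f_{n-1}+g_{n-1})+b_1\big)}{\lambda_{n-1}-\lambda_n},$$ $$p_{2,n}=-\frac{1}{\lambda_{n-2}-\lambda_n}\Big\{(n-1)\Big(p_{1,n}\big(a_0(n-2)(f_{n-3}+f_{n-2})+a_1(n-2)+b_0(f_{n-2}+g_{n-2})+b_1\big)+n\big(f_{n-2}(a_0f_{n-2}+a_1)+a_2\big)\Big)+n\,g_{n-1}\big(b_0f_{n-2}+b_1\big)\Big\}.$$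
   Context: Operators: $\mathbb{D}f(t)=\frac{f(t+1/2)-f(t-1/2)}{\mu(t+1/2)-\mu(t-1/2)}$, $\mathbb{S}f(t)=\frac{f(t+1/2)+f(t-1/2)}{2}$, acting on polynomials in $\mu(t)$. Basis: $\vartheta_n(t)=(-4)^{-n}(2t+1/2+c_2)_n(-2t+1/2-c_2)_n$ (Pochhammer symbols), $\vartheta_k=0$ for $k<0$; $\vartheta_n$ is monic of degree $n$ in $\mu(t)$, with $\mu(t)\vartheta_n=\vartheta_{n+1}+f_n\vartheta_n$, $\mathbb{S}\vartheta_n=\vartheta_n+g_n\vartheta_{n-1}$, $\mathbb{D}\vartheta_n=n\vartheta_{n-1}$, where $f_n=-\frac{c_2^2}{4}+\frac{(2n+1)^2}{16}+c_3$ and $g_n=\frac{n(2n-1)}{4}$. *)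

From mathcomp Require Import all_boot all_order all_algebra.
Set Implicit Arguments. Unset Strict Implicit. Unset Printing Implicit Defensive.
Import Order.TTheory GRing.Theory Num.Theory.
Local Open Scope ring_scope.

Section Defs.
Variable R : numFieldType.
Variables c2 c3 : R.

Definition mu : {poly R} := 'X^2 + c2 *: 'X + c3%:P.

Definition shift (h : R) (q : {poly R}) : {poly R} := q \Po ('X + h%:P).

(* D f(t) = (f(t+1/2) - f(t-1/2)) / (mu(t+1/2) - mu(t-1/2))
   (exact polynomial division on polynomials in mu(t)) *)
Definition Dop (q : {poly R}) : {poly R} :=
  (shift (2^-1) q - shift (- 2^-1) q) %/ (shift (2^-1) mu - shift (- 2^-1) mu).

Definition Sop (q : {poly R}) : {poly R} :=
  2^-1 *: (shift (2^-1) q + shift (- 2^-1) q).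

(* theta_n(t) = (-4)^{-n} (2t+1/2+c2)_n (-2t+1/2-c2)_n  (Pochhammer symbols) *)
Definition theta (n : nat) : {poly R} :=
  ((-4) ^- n) *: \prod_(i < n)
     ((2%:R *: 'X + (2^-1 + c2 + i%:R)%:P) * (- (2%:R *: 'X) + (2^-1 - c2 + i%:R)%:P)).

Definition fc (k : int) : R :=
  - (c2 ^+ 2) / 4%:R + (2%:R * k%:~R + 1) ^+ 2 / 16%:R + c3.
Definition gc (k : int) : R := k%:~R * (2%:R * k%:~R - 1) / 4%:R.

Definition theta_expansion (P : nat -> {poly R}) (p : nat -> nat -> R) : Prop :=
  (forall n, P n \Po mu = \sum_(j < n.+1) p j n *: theta (n - j)) /\
  (forall n j, (n < j)%N -> p j n = 0).

Variables a0 a1 a2 b0 b1 : R.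

Definition phi : {poly R} := a0 *: mu ^+ 2 + a1 *: mu + a2%:P.
Definition psi : {poly R} := b0 *: mu + b1%:P.
Definition lam (k : int) : R := k%:~R * (a0 * (k%:~R - 1) + b0).

Definition ode (l : R) (F : {poly R}) : Prop :=
  phi * Dop (Dop F) + psi * Sop (Dop F) = l *: F.

Definition p1_formula (n : nat) : R :=
  - (n%:R * (a0 * (n%:R - 1) * (fc (n%:Z - 2) + fc (n%:Z - 1)) + a1 * (n%:R - 1)
             + b0 * (fc (n%:Z - 1) + gc (n%:Z - 1)) + b1))
  / (lam (n%:Z - 1) - lam n%:Z).

Definition p2_formula (p1n : R) (n : nat) : R :=
  - (lam (n%:Z - 2) - lam n%:Z)^-1 *
    ((n%:R - 1) * (p1n * (a0 * (n%:R - 2) * (fc (n%:Z - 3) + fc (n%:Z - 2))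
                          + a1 * (n%:R - 2) + b0 * (fc (n%:Z - 2) + gc (n%:Z - 2)) + b1)
                   + n%:R * (fc (n%:Z - 2) * (a0 * fc (n%:Z - 2) + a1) + a2))
     + n%:R * gc (n%:Z - 1) * (b0 * fc (n%:Z - 2) + b1)).

End Defs.

From HB Require Import structures.
From Pilot Require Import Defs.
From mathcomp Require Import all_boot all_order all_algebra.
From mathcomp Require Import ring zify.
Set Implicit Arguments. Unset Strict Implicit. Unset Printing Implicit Defensive.
Import Order.TTheory GRing.Theory Num.Theory.
Local Open Scope ring_scope.

(* In the basis [theta k = prod_(i < k) (mu - f_i)] the operator
   [L = phi D^2 + psi S D] is upper triangular with three bands,
   [L theta_k = lam_k theta_k + A_k theta_(k-1) + B_k theta_(k-2)], and
   multiplication by [mu] is lower bidiagonal.  Comparing the coefficients of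
   [theta_(n-1)] and [theta_(n-2)] in [L P_n = lam_n P_n] gives [p_(1,n)] and
   [p_(2,n)]; uniqueness of [P_n] forces [lam_k <> lam_n] for [k < n].
   The Askey-Wilson relation gives
   [(L - lam_(n+1)) (L - lam_(n-1)) (mu P_n) = kappa_n P_n].  The choice of
   [beta_n] and [gamma_n] makes the residual
   [r = mu P_n - P_(n+1) - beta_n P_n - gamma_n P_(n-1)] a combination of the
   [theta_k] with [k < n - 1]; then [(L - lam_(n+1)) (L - lam_(n-1)) r] is a
   multiple of [P_n] of degree [< n - 1], hence zero, and as neither
   [lam_(n+1)] nor [lam_(n-1)] is an eigenvalue of [L] on that span, [r = 0]. *)

Lemma poly_ext_horner (R : numDomainType) (p q : {poly R}) :
  (forall x, p.[x] = q.[x]) -> p = q.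
Proof.
move=> epq; apply/eqP; rewrite -subr_eq0; apply/negPn/negP => nz_pq.
pose rs := [seq (i%:R : R) | i <- iota 0 (size (p - q))].
have rs_roots : all (root (p - q)) rs.
  by apply/allP => _ /mapP[i _ ->]; rewrite /root !hornerE epq subrr.
have rs_uniq : uniq rs.
  by rewrite map_inj_uniq ?iota_uniq // => i j /eqP; rewrite eqr_nat => /eqP.
by have := max_poly_roots nz_pq rs_roots rs_uniq; rewrite size_map size_iota ltnn.
Qed.

Definition hornerE' := (hornerD, hornerN, hornerX, hornerC, horner_exp, hornerZ,
  hornerM, hornerCM, horner_comp).

Ltac field_nz := field; repeat (apply/andP; split); rewrite ?oppr_eq0 ?pnatr_eq0 //.

Lemma big_ord_shift (V : nmodType) N (F : nat -> V) :
  F 0%N = 0 -> F N = 0 -> \sum_(i < N) F i = \sum_(i < N) F i.+1.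
Proof.
case: N => [|N] F0 FN; first by rewrite !big_ord0.
by rewrite big_ord_recl big_ord_recr /= F0 FN add0r addr0.
Qed.

Section Theta.
Variables (R : numFieldType) (c2 c3 : R).
Local Notation mu := (mu c2 c3).
Local Notation theta := (theta c2).
Local Notation f k := (fc c2 c3 k%:Z).
Local Notation g k := (gc R k%:Z).
Local Notation D := (Dop c2 c3).
Implicit Types (c : nat -> R) (q : {poly R}).

Lemma theta0 : theta 0 = 1.
Proof. by rewrite /theta big_ord0 expr0 invr1 scale1r. Qed.

Lemma thetaS k : theta k.+1 = theta k * (mu - (f k)%:P).
Proof.
apply: poly_ext_horner => x.
rewrite /theta /mu /fc !hornerE' !horner_prod big_ord_recr /= !hornerE' exprSr invfM.
by field_nz; rewrite expf_neq0 // oppr_eq0 pnatr_eq0.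
Qed.

Lemma theta_shift k x :
  (theta k.+1).[x + 2^-1] = (theta k.+1).[x] + g k.+1 * (theta k).[x]
                            + (2 * x + c2) * k.+1%:R / 2 * (theta k).[x] /\
  (theta k.+1).[x - 2^-1] = (theta k.+1).[x] + g k.+1 * (theta k).[x]
                            - (2 * x + c2) * k.+1%:R / 2 * (theta k).[x].
Proof.
elim: k x => [|k IHk] x.
  by rewrite !thetaS theta0 /mu /fc /gc !hornerE'; split; field_nz.
have [e1 e2] := IHk x.
rewrite ![theta k.+2]thetaS !hornerM e1 e2 ![theta k.+1]thetaS !hornerM.
move: (theta k).[x] => t; rewrite /mu /fc /gc !hornerE' -!pmulrn -!natr1; split; field_nz.
Qed.

Lemma mu_shift_diff : shift (2^-1) mu - shift (- 2^-1) mu = 2%:R *: 'X + c2%:P.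
Proof. by apply: poly_ext_horner => x; rewrite /shift /mu !hornerE'; field_nz. Qed.

Lemma Dop_theta k : D (theta k) = k%:R *: theta k.-1.
Proof.
case: k => [|k]; first by rewrite /Dop theta0 /shift !comp_polyC subrr div0p scale0r.
have nz_delta : 2%:R *: 'X + c2%:P != 0 :> {poly R}.
  have : (2%:R *: 'X + c2%:P)`_1 = 2%:R :> R by rewrite coefD coefZ coefX coefC mulr1 addr0.
  by apply: contra_eq_neq => ->; rewrite coef0 eq_sym pnatr_eq0.
rewrite /Dop mu_shift_diff.
suff -> : shift 2^-1 (theta k.+1) - shift (- 2^-1) (theta k.+1)
          = theta k * (k.+1%:R *: (2%:R *: 'X + c2%:P)) by rewrite -scalerAr divpZl mulpK.
apply: poly_ext_horner => x; have [e1 e2] := theta_shift k x.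
rewrite /shift hornerM hornerD hornerN !horner_comp !(hornerD, hornerX, hornerC).
rewrite -/(x - 2^-1) e1 e2; move: (theta k).[x] (theta k.+1).[x] => t t'.
by rewrite !hornerE'; field_nz.
Qed.

Lemma Sop_theta k : Sop (theta k) = theta k + g k *: theta k.-1.
Proof.
case: k => [|k].
  rewrite theta0 /gc mul0r mul0r scale0r addr0 -polyC1.
  by apply: poly_ext_horner => x; rewrite /Sop /shift !hornerE'; field_nz.
apply: poly_ext_horner => x; have [e1 e2] := theta_shift k x.
rewrite /Sop /shift hornerZ hornerD hornerD !horner_comp !(hornerD, hornerX, hornerC).
rewrite -/(x - 2^-1) e1 e2 [(_ *: theta k).[x]]hornerZ.
by move: (theta k).[x] (theta k.+1).[x] => t t'; field_nz.
Qed.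

Lemma Dop_is_linear : linear (Dop c2 c3).
Proof.
move=> a p q; rewrite /Dop /shift !comp_polyD !comp_polyZ.
by rewrite opprD addrACA -scalerBr divpD divpZl.
Qed.
HB.instance Definition _ :=
  GRing.isLinear.Build R {poly R} {poly R} _ (Dop c2 c3) Dop_is_linear.

Lemma Sop_is_linear : linear (@Sop R).
Proof.
move=> a p q; rewrite /Sop /shift !comp_polyD !comp_polyZ addrACA scalerDr.
by congr (_ + _); rewrite -scalerDr !scalerA mulrC.
Qed.
HB.instance Definition _ :=
  GRing.isLinear.Build R {poly R} {poly R} _ (@Sop R) Sop_is_linear.

Definition theta_poly k : {poly R} := \prod_(i < k) ('X - (f i)%:P).

Lemma theta_poly_monic k : theta_poly k \is monic.
Proof. by apply: monic_prod => i _; exact: monicXsubC. Qed.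

Lemma size_theta_poly k : size (theta_poly k) = k.+1.
Proof.
elim: k => [|k IHk]; first by rewrite /theta_poly big_ord0 size_poly1.
rewrite /theta_poly big_ord_recr /= size_Mmonic ?monicXsubC ?monic_neq0 ?theta_poly_monic //.
by rewrite IHk size_XsubC addn2.
Qed.

Lemma coef_theta_poly_size k : (theta_poly k)`_k = 1.
Proof. by have /monicP := theta_poly_monic k; rewrite lead_coefE size_theta_poly. Qed.

Lemma theta_polyE k : theta k = theta_poly k \Po mu.
Proof.
elim: k => [|k IHk]; first by rewrite theta0 /theta_poly big_ord0 comp_polyC.
by rewrite thetaS IHk /theta_poly big_ord_recr /= comp_polyM comp_polyB comp_polyX comp_polyC.
Qed.

Lemma size_mu : (1 < size mu)%N.
Proof.
rewrite ltnNge; apply/negP => /leq_sizeP /(_ 2 (leqnn 2)) /eqP.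
by rewrite /mu !coefE /= mulr0 !addr0 oner_eq0.
Qed.

Definition theta_comb N (c : nat -> R) : {poly R} := \sum_(i < N) c i *: theta i.

Lemma theta_combE N c : theta_comb N c = (\sum_(i < N) c i *: theta_poly i) \Po mu.
Proof. by rewrite linear_sum; apply: eq_bigr => i _; rewrite [RHS]linearZ /= theta_polyE. Qed.

Lemma coef_theta_poly_sum N c : (\sum_(i < N.+1) c i *: theta_poly i)`_N = c N.
Proof.
rewrite big_ord_recr /= coefD coefZ coef_sum big1 ?add0r.
  by rewrite coef_theta_poly_size mulr1.
move=> i _; rewrite coefZ nth_default ?mulr0 //.
by rewrite size_theta_poly ltn_ord.
Qed.

Lemma theta_poly_sum_eq0 N c :
  \sum_(i < N) c i *: theta_poly i = 0 -> forall i, (i < N)%N -> c i = 0.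
Proof.
elim: N => [//|N IHN] sum0 i.
have cN0 : c N = 0 by rewrite -coef_theta_poly_sum sum0 coef0.
rewrite ltnS leq_eqVlt => /predU1P[-> //|]; apply: IHN.
by move: sum0; rewrite big_ord_recr /= cN0 scale0r addr0.
Qed.

Lemma comp_mu_inj : injective (fun q => q \Po mu).
Proof.
by move=> p q /eqP; rewrite -subr_eq0 -comp_polyB comp_poly_eq0 ?size_mu // subr_eq0 => /eqP.
Qed.

Lemma theta_comb_inj N c (c' : nat -> R) :
  theta_comb N c = theta_comb N c' -> forall i, (i < N)%N -> c i = c' i.
Proof.
rewrite !theta_combE => /comp_mu_inj /eqP; rewrite -subr_eq0 -sumrB.
under eq_bigr do rewrite -scalerBl.
move=> /eqP /(theta_poly_sum_eq0 (c := fun i => c i - c' i)) cc' i /cc' /eqP.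
by rewrite subr_eq0 => /eqP.
Qed.

Lemma theta_comb_widen M N c :
  (forall i, (M <= i)%N -> c i = 0) -> (M <= N)%N -> theta_comb N c = theta_comb M c.
Proof.
move=> c0 leMN; rewrite /theta_comb (big_ord_widen N (fun i => c i *: theta i) leMN).
rewrite [RHS]big_mkcond /=; apply: eq_bigr => i _.
by case: ltnP => // /c0 ->; rewrite scale0r.
Qed.

Lemma theta_comb_rev n c :
  theta_comb n.+1 c = \sum_(j < n.+1) c (n - j)%N *: theta (n - j).
Proof.
rewrite /theta_comb (reindex_inj rev_ord_inj); apply: eq_bigr => j _ /=.
by rewrite subSS.
Qed.

Fixpoint theta_coords d (q : {poly R}) : nat -> R :=
  if d is d'.+1 then
    fun i => if i == d' then q`_d' else theta_coords d' (q - q`_d' *: theta_poly d') i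
  else fun=> 0.

Lemma theta_coordsP d q : (size q <= d)%N ->
  q \Po mu = theta_comb d (theta_coords d q) /\
  forall i, (d <= i)%N -> theta_coords d q i = 0.
Proof.
elim: d q => [|d IHd] q.
  by rewrite leqn0 size_poly_eq0 => /eqP ->; rewrite comp_poly0 /theta_comb big_ord0.
move=> szq; set q' := q - q`_d *: theta_poly d.
have szq' : (size q' <= d)%N.
  apply/leq_sizeP => j; rewrite leq_eqVlt => /predU1P[<-|ltdj].
    by rewrite coefB coefZ coef_theta_poly_size mulr1 subrr.
  rewrite coefB coefZ [(theta_poly d)`_j]nth_default ?size_theta_poly // mulr0 subr0.
  by apply: nth_default; apply: leq_trans szq ltdj.
have [q'E q'0] := IHd q' szq'; split=> [|i ltdi]; last first.
  by rewrite /= gtn_eqF // q'0 // ltnW.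
rewrite /theta_comb big_ord_recr /= eqxx.
under eq_bigr => i _ do rewrite (ltn_eqF (ltn_ord i)).
by rewrite -/(theta_comb _ _) -q'E theta_polyE -linearZ -linearD /= subrK.
Qed.

Lemma theta_expansion_exists (P : nat -> {poly R}) :
  (forall n, size (P n) <= n.+1)%N -> exists p, theta_expansion c2 c3 P p.
Proof.
move=> szP.
exists (fun j n => if (j <= n)%N then theta_coords n.+1 (P n) (n - j) else 0).
split=> [n|n j]; last by rewrite ltnNge => /negPf ->.
have [-> _] := theta_coordsP (szP n); rewrite theta_comb_rev.
by apply: eq_bigr => j _; rewrite -ltnS ltn_ord.
Qed.

End Theta.

Section Operator.
Variables (R : numFieldType) (c2 c3 a0 a1 a2 b0 b1 : R).
Local Notation mu := (mu c2 c3).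
Local Notation theta := (theta c2).
Local Notation f k := (fc c2 c3 k).
Local Notation g k := (gc R k).
Local Notation lam k := (lam a0 b0 k).
Local Notation theta_comb := (theta_comb c2).
Implicit Types (x y : nat -> R).

Definition Lop (F : {poly R}) : {poly R} :=
  phi c2 c3 a0 a1 a2 * Dop c2 c3 (Dop c2 c3 F) + psi c2 c3 b0 b1 * Sop (Dop c2 c3 F).

Lemma Lop_is_linear : linear Lop.
Proof. by move=> a p q; rewrite /Lop !linearP !mulrDr addrACA -!scalerAr scalerDr. Qed.
HB.instance Definition _ := GRing.isLinear.Build R {poly R} {poly R} _ Lop Lop_is_linear.

Definition Lcoef1 (k : nat) : R :=
  k%:R * (a0 * (k%:R - 1) * (f (k%:Z - 2) + f (k%:Z - 1)) + a1 * (k%:R - 1)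
          + b0 * (f (k%:Z - 1) + g (k%:Z - 1)) + b1).

Definition Lcoef2 (k : nat) : R :=
  k%:R * (k%:R - 1) * (f (k%:Z - 2) * (a0 * f (k%:Z - 2) + a1) + a2)
  + k%:R * g (k%:Z - 1) * (b0 * f (k%:Z - 2) + b1).

Ltac unfold_coefs :=
  rewrite /Defs.lam /Lcoef1 /Lcoef2 /phi /psi /Defs.mu /fc /gc ?intrB -?pmulrn -?natr1.

Lemma Lop_theta k :
  Lop (theta k) = lam k *: theta k + Lcoef1 k *: theta k.-1 + Lcoef2 k *: theta k.-2.
Proof.
rewrite /Lop Dop_theta linearZ /= Dop_theta [Sop _]linearZ /= (@Sop_theta _ _ c3).
case: k => [|[|m]] /=; rewrite ?(@thetaS _ _ c3) ?theta0.
- by apply: poly_ext_horner => x; rewrite !hornerE'; unfold_coefs; field_nz.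
- by apply: poly_ext_horner => x; rewrite !hornerE'; unfold_coefs; field_nz.
move: (theta m) => T; apply: poly_ext_horner => x; rewrite !hornerE'.
by move: T.[x] => t; unfold_coefs; field_nz.
Qed.

Lemma p1_formulaE n :
  p1_formula c2 c3 a0 a1 b0 b1 n = - Lcoef1 n / (lam (n%:Z - 1) - lam n).
Proof. by []. Qed.

Lemma p2_formulaE u n : p2_formula c2 c3 a0 a1 a2 b0 b1 u n.+1 =
  - (lam (n.+1%:Z - 2) - lam n.+1)^-1 * (Lcoef1 n * u + Lcoef2 n.+1).
Proof. by rewrite /p2_formula; congr (_ * _); unfold_coefs; ring. Qed.

Definition Lseq x (i : nat) : R := lam i * x i + Lcoef1 i.+1 * x i.+1 + Lcoef2 i.+2 * x i.+2.

Definition museq x (i : nat) : R := (if i is j.+1 then x j else 0) + f i * x i.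

Lemma Lop_comb N c : c N = 0 -> c N.+1 = 0 ->
  Lop (theta_comb N c) = theta_comb N (Lseq c).
Proof.
move=> cN cN1; rewrite /theta_comb linear_sum.
(* [theta i] unfolds to a scaled product; the pattern keeps [scalerA] off it. *)
under eq_bigr do rewrite linearZ /= Lop_theta !scalerDr ![_ *: (_ *: theta _)]scalerA.
under [RHS]eq_bigr do rewrite /Lseq !scalerDl.
rewrite !big_split /=; congr (_ + _ + _).
- by apply: eq_bigr => i _; rewrite mulrC.
- rewrite (big_ord_shift (F := fun i => (c i * Lcoef1 i) *: theta i.-1)) /=.
  + by apply: eq_bigr => i _; rewrite mulrC.
  + by rewrite /Lcoef1 mul0r mulr0 scale0r.
  + by rewrite cN mul0r scale0r.
rewrite (big_ord_shift (F := fun i => (c i * Lcoef2 i) *: theta i.-2)) /=; last first.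
- by rewrite cN mul0r scale0r.
- by rewrite /Lcoef2 !mul0r add0r mulr0 scale0r.
rewrite (big_ord_shift (F := fun i => (c i.+1 * Lcoef2 i.+1) *: theta i.-1)) /=.
- by apply: eq_bigr => i _; rewrite mulrC.
- by rewrite /Lcoef2 /gc !(subrr, mul0r, mulr0, add0r, addr0, scale0r).
- by rewrite cN1 mul0r scale0r.
Qed.

Lemma mu_theta k : mu * theta k = theta k.+1 + f k *: theta k.
Proof. by rewrite (@thetaS _ _ c3) mulrBr [theta k * _%:P]mulrC mul_polyC subrK mulrC. Qed.

Lemma mu_comb N c : c N = 0 -> mu * theta_comb N c = theta_comb N.+1 (museq c).
Proof.
move=> cN; rewrite /theta_comb mulr_sumr.
under eq_bigr do rewrite -scalerAr mu_theta scalerDr [_ *: (_ *: theta _)]scalerA.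
under [RHS]eq_bigr do rewrite /museq scalerDl.
rewrite !big_split /= big_ord_recl big_ord_recr /= cN mulr0 scale0r scale0r add0r addr0.
by congr (_ + _); apply: eq_bigr => i _; rewrite mulrC.
Qed.

Definition Lsub (l : R) x (i : nat) : R := Lseq x i - l * x i.

Lemma eq_Lseq x y : x =1 y -> Lseq x =1 Lseq y.
Proof. by move=> exy i; rewrite /Lseq !exy. Qed.

Lemma eq_museq x y : x =1 y -> museq x =1 museq y.
Proof. by move=> exy [|i]; rewrite /museq !exy. Qed.

Lemma LseqZ u x i : Lseq (fun j => u * x j) i = u * Lseq x i.
Proof. by rewrite /Lseq; ring. Qed.

Lemma museqZ u x i : museq (fun j => u * x j) i = u * museq x i.
Proof. by case: i => [|i]; rewrite /museq; ring. Qed.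

Lemma Lsub_support N l x : (forall i, (N <= i)%N -> x i = 0) ->
  forall i, (N <= i)%N -> Lsub l x i = 0.
Proof.
move=> x0 i leNi; rewrite /Lsub /Lseq !x0 ?mulr0 ?addr0 ?subrr //; lia.
Qed.

Lemma Lsub_eq0 N l x : (forall i, (N <= i)%N -> x i = 0) ->
  (forall i, Lsub l x i = 0) -> (forall j, (j < N)%N -> lam j != l) -> forall i, x i = 0.
Proof.
elim: N => [|N IHN] x0 ex lamj; first by move=> i; apply: x0.
apply: (IHN _ ex) => [i|j ltjN]; last by apply: lamj; apply: ltnW.
rewrite leq_eqVlt => /predU1P[<-|]; last exact: x0.
have [xN1 xN2] : x N.+1 = 0 /\ x N.+2 = 0 by split; apply: x0.
have := ex N; rewrite /Lsub /Lseq xN1 xN2 !mulr0 !addr0.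
by move/eqP; rewrite -mulrBl mulf_eq0 subr_eq0 (negPf (lamj N _)) //= => /eqP.
Qed.

(* An Askey-Wilson type relation between L and multiplication by mu, read on
   coordinates in the basis theta. *)
Lemma askey_wilson x i :
  Lseq (Lseq (museq x)) i - 2 * Lseq (museq (Lseq x)) i + museq (Lseq (Lseq x)) i
  - 2 * a0 * (Lseq (museq x) i + museq (Lseq x) i) - (b0 ^+ 2 - 2 * a0 * b0) * museq x i
  = 2 * Lseq (Lseq x) i + (2 * a1 - b0) * Lseq x i + b1 * (b0 - 2 * a0) * x i.
Proof.
case: i => [|i]; rewrite /Lseq /museq /=; unfold_coefs.
  by move: (x 0%N) (x 1%N) (x 2%N) (x 3%N) (x 4%N) (x 5%N) => ? ? ? ? ? ?; field_nz.
move: (x i) (x i.+1) (x i.+2) (x i.+3) (x i.+4) (x i.+4.+1) (i%:R) => ? ? ? ? ? ? ?.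
by field_nz.
Qed.

Lemma theta_comb_eigen N c l : (forall i, (N <= i)%N -> c i = 0) ->
  Lop (theta_comb N c) = l *: theta_comb N c -> forall i, Lseq c i = l * c i.
Proof.
move=> c0; rewrite Lop_comb ?c0 // /theta_comb scaler_sumr.
under [RHS]eq_bigr do rewrite [_ *: (_ *: theta _)]scalerA.
move=> /(@theta_comb_inj _ _ c3 _ _ (fun i => l * c i)) eqc i.
case: (ltnP i N) => [/eqc //|leNi].
by have := Lsub_support l c0 leNi; rewrite /Lsub c0 // mulr0 subr0 => ->.
Qed.

Lemma Lsub_Lsub a b x i :
  Lsub a (Lsub b x) i = Lseq (Lseq x) i - (a + b) * Lseq x i + a * b * x i.
Proof. by rewrite /Lsub /Lseq; ring. Qed.

Lemma Lsub_Lsub_eigen a b l x : (forall i, Lseq x i = l * x i) ->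
  forall i, Lsub a (Lsub b x) i = (l - a) * (l - b) * x i.
Proof. by move=> ex i; rewrite Lsub_Lsub (eq_Lseq ex) LseqZ !ex; ring. Qed.

Lemma museq_eigen (n : nat) x : (forall i, Lseq x i = lam n * x i) ->
  forall i, Lsub (lam n.+1) (Lsub (lam (n%:Z - 1)) (museq x)) i
            = (2 * lam n ^+ 2 + (2 * a1 - b0) * lam n + b1 * (b0 - 2 * a0)) * x i.
Proof.
move=> ex i.
have LLx j : Lseq (Lseq x) j = lam n ^+ 2 * x j by rewrite (eq_Lseq ex) LseqZ ex mulrA -expr2.
have LMLx : Lseq (museq (Lseq x)) i = lam n * Lseq (museq x) i.
  by rewrite (eq_Lseq (eq_museq ex)) (eq_Lseq (museqZ _ _)) LseqZ.
have MLx : museq (Lseq x) i = lam n * museq x i by rewrite (eq_museq ex) museqZ.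
have MLLx : museq (Lseq (Lseq x)) i = lam n ^+ 2 * museq x i by rewrite (eq_museq LLx) museqZ.
have := askey_wilson x i; rewrite LMLx MLx MLLx LLx ex => aw.
rewrite Lsub_Lsub; apply: etrans (etrans _ aw) _;
  by rewrite /Defs.lam ?intrB -?pmulrn -?natr1; ring.
Qed.

Lemma three_term_residual_eq0 (n : nat) x x1 x0 (be ga : R) :
  (forall i, Lseq x i = lam n * x i) ->
  (forall i, Lseq x1 i = lam n.+1 * x1 i) ->
  (forall i, Lseq x0 i = lam (n%:Z - 1) * x0 i) ->
  x n = 1 ->
  (forall j, (j < n.-1)%N -> lam j != lam n.+1 /\ lam j != lam (n%:Z - 1)) ->
  let d i := museq x i - x1 i - be * x i - ga * x0 i in
  (forall i, (n.-1 <= i)%N -> d i = 0) -> forall i, d i = 0.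
Proof.
move=> ex ex1 ex0 xn lam_neq d d0.
set a := lam n.+1; set b := lam (n%:Z - 1).
pose K := 2 * lam n ^+ 2 + (2 * a1 - b0) * lam n + b1 * (b0 - 2 * a0)
          - be * ((lam n - a) * (lam n - b)).
have Ld i : Lsub a (Lsub b d) i = K * x i.
  transitivity (Lsub a (Lsub b (museq x)) i - Lsub a (Lsub b x1) i
                - be * Lsub a (Lsub b x) i - ga * Lsub a (Lsub b x0) i).
    by rewrite /Lsub /Lseq /d; ring.
  rewrite museq_eigen // (Lsub_Lsub_eigen _ _ ex1) (Lsub_Lsub_eigen _ _ ex).
  by rewrite (Lsub_Lsub_eigen _ _ ex0) /K /a /b; ring.
have K0 : K = 0.
  have := Ld n; rewrite xn mulr1 => <-.
  exact: (Lsub_support a (Lsub_support b d0)) _ (leq_pred n).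
have Lbd0 : forall i, Lsub b d i = 0.
  apply: (Lsub_eq0 (l := a) (Lsub_support b d0)) => [i|j /lam_neq[]//].
  by rewrite Ld K0 mul0r.
by apply: (Lsub_eq0 d0 Lbd0) => j /lam_neq[].
Qed.

End Operator.

Section ThreeTermRecurrence.
Variables (R : numFieldType) (c2 c3 a0 a1 a2 b0 b1 : R).
Variables (P : nat -> {poly R}) (p : nat -> nat -> R).
Local Notation mu := (mu c2 c3).
Local Notation f k := (fc c2 c3 k).
Local Notation lam k := (lam a0 b0 k).
Local Notation theta_comb := (theta_comb c2).
Local Notation Lop := (Lop c2 c3 a0 a1 a2 b0 b1).

Hypothesis P_monic : forall n, P n \is monic.
Hypothesis size_P : forall n, size (P n) = n.+1.
Hypothesis P_eigen : forall n, Lop (P n \Po mu) = lam n *: (P n \Po mu).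
Hypothesis P_uniq : forall n q, q \is monic -> size q = n.+1 ->
  Lop (q \Po mu) = lam n *: (q \Po mu) -> q = P n.
Hypothesis p_expansion : theta_expansion c2 c3 P p.

Lemma lam_neq k n : (k < n)%N -> lam k != lam n.
Proof.
move=> ltkn; apply/eqP => lamkn.
have lt_size : (size (P k) < size (P n))%N by rewrite !size_P.
have monic_sum : P n + P k \is monic by rewrite monicE lead_coefDl // -monicE.
have size_sum : size (P n + P k) = n.+1 by rewrite size_addl // size_P.
have eigen_sum : Lop ((P n + P k) \Po mu) = lam n *: ((P n + P k) \Po mu).
  by rewrite comp_polyD linearD /= !P_eigen lamkn scalerDr.
have /eqP := P_uniq monic_sum size_sum eigen_sum.
by rewrite -subr_eq0 addrC addKr -size_poly_eq0 size_P.
Qed.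

Definition coord n i := if (i <= n)%N then p (n - i) n else 0.

Lemma P_comb n : P n \Po mu = theta_comb n.+1 (coord n).
Proof.
rewrite p_expansion.1 theta_comb_rev; apply: eq_bigr => j _.
by rewrite /coord leq_subr subKn // -ltnS.
Qed.

Lemma coord_gt n i : (n < i)%N -> coord n i = 0.
Proof. by rewrite /coord ltnNge => /negPf ->. Qed.

Lemma coord_top n : coord n n = 1.
Proof.
have /monicP := P_monic n; rewrite lead_coefE size_P /= => <-.
have := P_comb n; rewrite (@theta_combE _ _ c3) => /comp_mu_inj ->.
by rewrite coef_theta_poly_sum.
Qed.

Lemma coord_eigen n i : Lseq c2 c3 a0 a1 a2 b0 b1 (coord n) i = lam n * coord n i.
Proof. by apply: theta_comb_eigen i; [exact: coord_gt | rewrite -P_comb P_eigen]. Qed.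

Lemma coord_pred n : coord n.+1 n = p 1 n.+1.
Proof. by rewrite /coord leqnSn subSnn. Qed.

Lemma p1_eq n : p 1 n = p1_formula c2 c3 a0 a1 b0 b1 n.
Proof.
rewrite p1_formulaE; case: n => [|n].
  by rewrite p_expansion.2 // /Lcoef1 !mul0r oppr0 mul0r.
have := coord_eigen n.+1 n.
rewrite /Lseq coord_pred coord_top coord_gt // mulr1 mulr0 addr0.
have -> : n.+1%:Z - 1 = n by lia.
move=> eigen; have : lam n - lam n.+1 != 0 by rewrite subr_eq0 lam_neq.
have -> : Lcoef1 c2 c3 a0 a1 b0 b1 n.+1 = (lam n.+1 - lam n) * p 1 n.+1.
  by apply: (addrI (lam n * p 1 n.+1)); rewrite eigen; ring.
by move=> ?; field.
Qed.

Lemma coord_pred2 n : coord n.+2 n = p 2 n.+2.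
Proof. by rewrite /coord leqW // -addn2 addKn. Qed.

Lemma p2_eq n : p 2 n = p2_formula c2 c3 a0 a1 a2 b0 b1 (p 1 n) n.
Proof.
case: n => [|n]; first by rewrite /p2_formula !p_expansion.2 //; ring.
rewrite p2_formulaE; case: n => [|n].
  by rewrite p_expansion.2 // /Lcoef1 /Lcoef2 /gc subrr; ring.
have := coord_eigen n.+2 n; rewrite /Lseq coord_pred coord_pred2 coord_top mulr1.
have -> : n.+2%:Z - 2 = n by lia.
move=> eigen; have : lam n - lam n.+2 != 0 by rewrite subr_eq0 lam_neq.
have -> : Lcoef1 c2 c3 a0 a1 b0 b1 n.+1 * p 1 n.+2 + Lcoef2 c2 c3 a0 a1 a2 b0 b1 n.+2
          = (lam n.+2 - lam n) * p 2 n.+2.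
  by apply: (addrI (lam n * p 2 n.+2)); rewrite addrA eigen; ring.
by move=> ?; field.
Qed.

Definition coord_prev n i := if n is m.+1 then coord m i else 0.

Lemma coord_prev_comb n :
  (if n is m.+1 then P m \Po mu else 0) = theta_comb n.+2 (coord_prev n).
Proof.
case: n => [|m] /=; first by rewrite /theta_comb big1 // => i _; rewrite scale0r.
by rewrite P_comb (theta_comb_widen c2 (M := m.+1)) //; [exact: coord_gt | lia].
Qed.

Lemma coord_prev_eigen n i :
  Lseq c2 c3 a0 a1 a2 b0 b1 (coord_prev n) i = lam (n%:Z - 1) * coord_prev n i.
Proof.
case: n => [|m]; first by rewrite /Lseq /coord_prev !mulr0 !addr0.
have -> : m.+1%:Z - 1 = m by lia.
exact: coord_eigen.
Qed.

Definition beta n := p 1 n - p 1 n.+1 + f n.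
Definition gamma n := p 1 n * (f (n%:Z - 1) - beta n) + p 2 n - p 2 n.+1.

Lemma three_term_top_coords n i : (n.-1 <= i)%N ->
  museq c2 c3 (coord n) i - coord n.+1 i - beta n * coord n i
  - gamma n * coord_prev n i = 0.
Proof.
have prev_gt j : (n <= j)%N -> coord_prev n j = 0.
  by case: n => [//|m] /= lemj; rewrite coord_gt.
move=> le_i; case: (leqP n.+2 i) => [le_n2i|].
  rewrite /museq; case: i le_n2i le_i => [//|i] le_n2i _.
  by rewrite !coord_gt ?prev_gt ?mulr0 ?addr0 ?subrr //; lia.
rewrite ltnS leq_eqVlt => /predU1P[->|].
  by rewrite /museq !coord_top coord_gt ?prev_gt //; ring.
rewrite ltnS leq_eqVlt => /predU1P[->|lt_in].
  rewrite /museq coord_top coord_pred prev_gt // /beta.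
  by case: n {prev_gt le_i} => [|m]; rewrite ?(p_expansion.2 0 1) ?coord_pred //; ring.
case: n {prev_gt} le_i lt_in => [//|m] /= le_mi lt_im1.
have {le_mi lt_im1} -> : i = m by lia.
rewrite /museq /coord_prev coord_pred coord_pred2 coord_top /gamma /beta.
have -> : m.+1%:Z - 1 = m by lia.
by case: m => [|m]; rewrite ?(p_expansion.2 1 2) ?coord_pred2 //; ring.
Qed.

Lemma three_term n :
  P n.+1 \Po mu = (mu - (beta n)%:P) * (P n \Po mu)
                  - gamma n *: (if n is m.+1 then P m \Po mu else 0).
Proof.
have lam_cond j : (j < n.-1)%N -> lam j != lam n.+1 /\ lam j != lam (n%:Z - 1).
  move=> lt_j; split; first by apply: lam_neq; lia.
  case: n lt_j => [//|m] /= lt_jm; have -> : m.+1%:Z - 1 = m by lia.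
  exact: lam_neq.
have residual := three_term_residual_eq0 (coord_eigen n) (coord_eigen n.+1)
  (coord_prev_eigen n) (coord_top n) lam_cond (three_term_top_coords (n := n)).
rewrite coord_prev_comb !P_comb mulrBl (@mu_comb _ _ c3) ?coord_gt //.
rewrite -(theta_comb_widen c2 (N := n.+2) (@coord_gt n)) //.
rewrite mul_polyC /theta_comb !scaler_sumr -!sumrB; apply: eq_bigr => i _.
rewrite ![_ *: (_ *: theta _ _)]scalerA -!scalerBl; congr (_ *: _).
by rewrite -[LHS]addr0 -(residual i); ring.
Qed.

End ThreeTermRecurrence.

Theorem theorem4p5 (R : numFieldType) (c2 c3 a0 a1 a2 b0 b1 : R)
  (P : nat -> {poly R})
  (hmonic : forall n, P n \is monic)
  (hsize : forall n, size (P n) = n.+1)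
  (hsol : forall n, ode c2 c3 a0 a1 a2 b0 b1 (lam a0 b0 n%:Z) (P n \Po mu c2 c3))
  (huniq : forall n (q : {poly R}), q \is monic -> size q = n.+1 ->
      ode c2 c3 a0 a1 a2 b0 b1 (lam a0 b0 n%:Z) (q \Po mu c2 c3) -> q = P n) :
  (exists p, theta_expansion c2 c3 P p) /\
  forall p : nat -> nat -> R, theta_expansion c2 c3 P p ->
    let beta n := p 1%N n - p 1%N n.+1 + fc c2 c3 n%:Z in
    let gamma n := p 1%N n * (fc c2 c3 (n%:Z - 1) - beta n) + p 2%N n - p 2%N n.+1 in
    (forall n, p 1%N n = p1_formula c2 c3 a0 a1 b0 b1 n) /\
    (forall n, p 2%N n = p2_formula c2 c3 a0 a1 a2 b0 b1 (p 1%N n) n) /\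
    (forall n, P n.+1 \Po mu c2 c3 =
       (mu c2 c3 - (beta n)%:P) * (P n \Po mu c2 c3)
       - gamma n *: (if n is m.+1 then P m \Po mu c2 c3 else 0)).
Proof.
split; first by apply: theta_expansion_exists => n; rewrite hsize.
move=> p hp beta gamma; split; first exact: p1_eq hmonic hsize hsol huniq hp.
split; first exact: p2_eq hmonic hsize hsol huniq hp.
exact: three_term hmonic hsize hsol huniq hp.
Qed.
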